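(* The space $X_{\mathrm{crs}}$ is contractible.
   Context: Let $X$ be the following 2-dimensional CW-complex. Its 0-cells are $e_n^0$, $n\ge 0$; the point $x=e_0^0$ is called the origin. For each $n\ge1$ there are two 1-cells $e_n^1, e_{-n}^1$, each joining $x$ to $e_n^0$, so that $e_0^0\cup e_n^0\cup e_n^1\cup e_{-n}^1$ is homeomorphic to a circle; for each $n\ge1$ a 2-cell $e_n^2$ is attached via a homeomorphism $\varphi_n:S^1\to e_0^0\cup e_n^0\cup e_n^1\cup e_{-n}^1$. Thus each closed 2-cell $\overline{e_n^2}$ is a closed disk having $x$ and $e_n^0$ on its boundary, and $X$ is a wedge at $x$ of countably many closed disks, carrying the CW (weak) topology. The coarser topology on the set $X$ consists of all subsets $U\subset X$ that are open in the CW-topology and either do not contain $x$, or contain $\overline{e_n^2}\smallsetminus e_n^0$ for all but finitely many $n\ge1$. The set $X$ with this coarser topology is denoted $X_{\mathrm{crs}}$. *)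

From Stdlib Require Import Reals.
Open Scope R_scope.

(* Each closed 2-cell is the closed unit disk D in R^2, attached so
   that its boundary point (-1,0) goes to the origin x = e_0^0 and (1,0) is the
   0-cell e_n^0; the upper / lower open semicircles are e_n^1, e_{-n}^1.
   The disk with index k : nat is the cell e_{k+1}^2 (so k ranges over all
   nat <-> n ranges over n >= 1). *)

Definition in_disk (p : R * R) : Prop := fst p ^ 2 + snd p ^ 2 <= 1.

Definition basept : R * R := (-1, 0).
Definition vertpt : R * R := (1, 0).

Definition Xcell : Type :=
  { q : nat * (R * R) | in_disk (snd q) /\ snd q <> basept }.

Definition X : Type := option Xcell.

Definition origin : X := None.

(* preimage of U ⊆ X under the characteristic map of the closed disk k *)
Definition preim (k : nat) (U : X -> Prop) (p : R * R) : Prop :=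
  in_disk p /\
  ((p = basept /\ U origin) \/
   (exists h : in_disk p /\ p <> basept, U (Some (exist _ (k, p) h)))).

Definition rel_open_disk (S : R * R -> Prop) : Prop :=
  forall p, S p -> exists eps, 0 < eps /\
    forall q, in_disk q ->
      (fst p - fst q) ^ 2 + (snd p - snd q) ^ 2 < eps ^ 2 -> S q.

Definition cw_open (U : X -> Prop) : Prop :=
  forall k, rel_open_disk (preim k U).

Definition crs_open (U : X -> Prop) : Prop :=
  cw_open U /\
  (~ U origin \/
   exists N : nat, forall k, (N <= k)%nat ->
     forall p, in_disk p -> p <> vertpt -> preim k U p).

(* Continuity of H : X_crs x [0,1] -> X_crs (product topology on X_crs x [0,1],
   H only considered for t in [0,1]). *)
Definition crs_homotopy_continuous (H : X -> R -> X) : Prop :=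
  forall U : X -> Prop, crs_open U ->
    forall a t, 0 <= t <= 1 -> U (H a t) ->
      exists V : X -> Prop, crs_open V /\ V a /\
        exists eps, 0 < eps /\
          forall b s, V b -> 0 <= s <= 1 -> Rabs (s - t) < eps -> U (H b s).

Definition crs_contractible : Prop :=
  exists (H : X -> R -> X) (c : X),
    crs_homotopy_continuous H /\
    (forall a, H a 0 = a) /\
    (forall a, H a 1 = c).

From Stdlib Require Import Reals Lra Psatz Classical ClassicalEpsilon ProofIrrelevance.
Open Scope R_scope.

(* X_crs is contractible: contract every closed disk linearly onto its base
   point (-1,0), which is glued to the origin x, and keep x fixed:
     H((k,p), t) = (1-t) p + t (-1,0),      H(x, t) = x.
   Away from x, continuity of H is continuity of the straight-line homotopy
   inside one disk.  At x, a crs-open U containing x contains the punctured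
   disks (vertex removed) of every index >= N, and a small square around the
   base point in each disk.  The set V consisting of x, these punctured disks
   and the points lying in such a square is again crs-open, and H maps
   V x [0,1] into U, because H only moves points towards the base point: it
   keeps them in the squares around the base point and away from the vertex. *)

Definition in_box (p q : R * R) (r : R) : Prop :=
  Rabs (fst p - fst q) < r /\ Rabs (snd p - snd q) < r.

Definition box_open_disk (S : R * R -> Prop) : Prop :=
  forall p, S p -> exists r, 0 < r /\ forall q, in_disk q -> in_box p q r -> S q.

Lemma Rabs_lt_of_sqr (a e : R) : 0 < e -> a ^ 2 < e ^ 2 -> Rabs a < e.
Proof.
  intros epos lt; rewrite <- (Rabs_pos_eq e) by lra.
  apply Rsqr_lt_abs_0; unfold Rsqr; simpl in lt; lra.
Qed.

(* Boxes and round balls define the same relative topology on the disk: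
   the ball of radius r lies in the box of radius r, and the box of radius
   e/2 lies in the ball of radius e. *)
Lemma rel_open_disk_box (S : R * R -> Prop) :
  rel_open_disk S <-> box_open_disk S.
Proof.
  split; intros Hopen p Sp; destruct (Hopen p Sp) as [e [epos He]].
  - exists (e / 2); split; [lra|].
    intros q dq [B1 B2]; apply He; auto.
    apply Rabs_def2 in B1; apply Rabs_def2 in B2.
    destruct p as [p1 p2], q as [q1 q2]; simpl in *.
    assert ((p1 - q1) ^ 2 < (e / 2) ^ 2) by nra.
    assert ((p2 - q2) ^ 2 < (e / 2) ^ 2) by nra.
    nra.
  - exists e; split; auto.
    intros q dq Hq; apply He; auto.
    destruct p as [p1 p2], q as [q1 q2]; unfold in_box; simpl in *.
    pose proof (pow2_ge_0 (p1 - q1)); pose proof (pow2_ge_0 (p2 - q2)).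
    split; apply Rabs_lt_of_sqr; lra.
Qed.

Lemma in_box_refl (p : R * R) (r : R) : 0 < r -> in_box p p r.
Proof. intros rpos; split; rewrite Rminus_diag, Rabs_R0; lra. Qed.

Lemma in_box_mono (p q : R * R) (r r' : R) : in_box p q r -> r <= r' -> in_box p q r'.
Proof. intros [B1 B2] rle; split; lra. Qed.

Lemma in_box_open (p q : R * R) (r : R) :
  in_box p q r -> exists r', 0 < r' /\ forall q', in_box q q' r' -> in_box p q' r.
Proof.
  intros [B1 B2].
  set (d1 := r - Rabs (fst p - fst q)); set (d2 := r - Rabs (snd p - snd q)).
  exists (Rmin d1 d2); split; [apply Rmin_glb_lt; unfold d1, d2; lra|].
  intros q' [C1 C2].
  pose proof (Rmin_l d1 d2); pose proof (Rmin_r d1 d2).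
  pose proof (Rabs_triang (fst p - fst q) (fst q - fst q')) as T1.
  pose proof (Rabs_triang (snd p - snd q) (snd q - snd q')) as T2.
  replace (fst p - fst q + (fst q - fst q')) with (fst p - fst q') in T1 by ring.
  replace (snd p - snd q + (snd q - snd q')) with (snd p - snd q') in T2 by ring.
  unfold d1, d2 in *; split; lra.
Qed.

Lemma in_box_avoid (q c : R * R) :
  q <> c -> exists r, 0 < r /\ forall q', in_box q q' r -> q' <> c.
Proof.
  intros nqc; destruct q as [q1 q2], c as [c1 c2].
  destruct (Req_dec q1 c1) as [e|e].
  - assert (q2 <> c2) by (intro; apply nqc; subst; reflexivity).
    exists (Rabs (q2 - c2)); split; [apply Rabs_pos_lt; lra|].
    intros q' [_ B2] ->; simpl in B2; lra.
  - exists (Rabs (q1 - c1)); split; [apply Rabs_pos_lt; lra|].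
    intros q' [B1 _] ->; simpl in B1; lra.
Qed.

Lemma disk_bounds (p : R * R) : in_disk p -> -1 <= fst p <= 1 /\ -1 <= snd p <= 1.
Proof. unfold in_disk; intros h; split; split; nra. Qed.

Lemma basept_in_disk : in_disk basept.
Proof. unfold in_disk, basept; simpl; lra. Qed.

Definition contract (p : R * R) (s : R) : R * R :=
  ((1 - s) * fst p - s, (1 - s) * snd p).

Lemma contract_0 (p : R * R) : contract p 0 = p.
Proof. destruct p; unfold contract; simpl; f_equal; ring. Qed.

Lemma contract_1 (p : R * R) : contract p 1 = basept.
Proof. destruct p; unfold contract, basept; simpl; f_equal; ring. Qed.

(* The disk is convex and contains the base point, so it is preserved. *)
Lemma contract_in_disk (q : R * R) (s : R) :
  in_disk q -> 0 <= s <= 1 -> in_disk (contract q s).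
Proof.
  intros dq hs; pose proof (disk_bounds q dq) as [[lo _] _].
  unfold in_disk, contract in *; destruct q as [q1 q2]; simpl in *.
  assert (E : ((1 - s) * q1 - s) ^ 2 + ((1 - s) * q2) ^ 2 =
              (1 - s) ^ 2 * (q1 ^ 2 + q2 ^ 2) - 2 * s * (1 - s) * q1 + s ^ 2) by ring.
  assert ((1 - s) ^ 2 * (q1 ^ 2 + q2 ^ 2) <= (1 - s) ^ 2 * 1)
    by (apply Rmult_le_compat_l; [apply pow2_ge_0 | lra]).
  assert (0 <= 2 * s * (1 - s)) by nra.
  assert (- 2 * s * (1 - s) * q1 <= 2 * s * (1 - s)) by nra.
  nra.
Qed.

(* The vertex (1,0) is extreme in the disk, so a disk point other than the
   vertex never reaches it. *)
Lemma contract_avoids_vertex (q : R * R) (s : R) :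
  in_disk q -> q <> vertpt -> 0 <= s <= 1 -> contract q s <> vertpt.
Proof.
  intros dq nqv hs E; pose proof (disk_bounds q dq) as [[_ hi] _].
  destruct q as [q1 q2]; unfold contract, vertpt in *; simpl in *.
  injection E as E1 E2.
  destruct (Req_dec s 0) as [->|ns].
  - apply nqv; f_equal; lra.
  - assert ((1 - s) * q1 <= 1 - s) by nra; lra.
Qed.

Lemma contract_in_basept_box (q : R * R) (s r : R) :
  in_box basept q r -> 0 <= s <= 1 -> in_box basept (contract q s) r.
Proof.
  intros [B1 B2] hs; apply Rabs_def2 in B1; apply Rabs_def2 in B2.
  destruct q as [q1 q2]; unfold in_box, contract, basept in *; simpl in *.
  split; apply Rabs_def1; nra.
Qed.

Lemma contract_continuous (p q : R * R) (t s r : R) :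
  in_disk p -> 0 < r -> in_box p q (r / 2) -> Rabs (s - t) < r / 4 ->
  0 <= s <= 1 -> 0 <= t <= 1 -> in_box (contract p t) (contract q s) r.
Proof.
  intros dp rpos [B1 B2] Hst hs ht; pose proof (disk_bounds p dp) as [[a b] [c d]].
  apply Rabs_def2 in B1; apply Rabs_def2 in B2; apply Rabs_def2 in Hst.
  destruct p as [p1 p2], q as [q1 q2]; unfold in_box, contract; simpl in *.
  replace ((1 - t) * p1 - t - ((1 - s) * q1 - s))
    with ((1 - s) * (p1 - q1) + (s - t) * (p1 + 1)) by ring.
  replace ((1 - t) * p2 - (1 - s) * q2)
    with ((1 - s) * (p2 - q2) + (s - t) * p2) by ring.
  assert (- (r / 2) < (1 - s) * (p1 - q1) < r / 2) by (split; nra).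
  assert (- (r / 2) < (1 - s) * (p2 - q2) < r / 2) by (split; nra).
  assert (- (r / 2) <= (s - t) * (p1 + 1) <= r / 2) by (split; nra).
  assert (- (r / 4) <= (s - t) * p2 <= r / 4) by (split; nra).
  split; apply Rabs_def1; lra.
Qed.

(* The characteristic map of the closed disk k: the base point goes to x. *)
Definition embed (k : nat) (q : R * R) : X :=
  match excluded_middle_informative (in_disk q /\ q <> basept) with
  | left h => Some (exist _ (k, q) h)
  | right _ => None
  end.

Lemma embed_cell (k : nat) (q : R * R) (h : in_disk q /\ q <> basept) :
  embed k q = Some (exist _ (k, q) h).
Proof.
  unfold embed; destruct (excluded_middle_informative _) as [h'|h'].
  - rewrite (proof_irrelevance _ h' h); reflexivity.
  - contradiction.
Qed.

Lemma embed_basept (k : nat) : embed k basept = origin.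
Proof.
  unfold embed; destruct (excluded_middle_informative _) as [h|h]; [|reflexivity].
  exfalso; apply (proj2 h); reflexivity.
Qed.

Lemma preim_embed (U : X -> Prop) (k : nat) (q : R * R) :
  in_disk q -> (preim k U q <-> U (embed k q)).
Proof.
  intros dq; split.
  - intros [_ [[-> Uo]|[h Uh]]]; [rewrite embed_basept; exact Uo|].
    rewrite (embed_cell k q h); exact Uh.
  - intros HU; split; auto.
    destruct (classic (q = basept)) as [->|nqb].
    + left; rewrite embed_basept in HU; auto.
    + right; exists (conj dq nqb); rewrite <- embed_cell; exact HU.
Qed.

Lemma preim_intro (W : X -> Prop) (j : nat) (q : R * R) :
  in_disk q -> W origin -> (forall h, W (Some (exist _ (j, q) h))) -> preim j W q.
Proof.
  intros dq Wo Wc; split; auto.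
  destruct (classic (q = basept)) as [e|e]; [left; auto|].
  right; exists (conj dq e); apply Wc.
Qed.

Definition contraction (a : X) (t : R) : X :=
  match a with
  | None => None
  | Some c => embed (fst (proj1_sig c)) (contract (snd (proj1_sig c)) t)
  end.

Lemma contraction_0 (a : X) : contraction a 0 = a.
Proof.
  destruct a as [[[k p] hp]|]; [|reflexivity].
  simpl; rewrite contract_0; apply embed_cell.
Qed.

Lemma contraction_1 (a : X) : contraction a 1 = origin.
Proof.
  destruct a as [[[k p] hp]|]; [|reflexivity].
  simpl; rewrite contract_1; apply embed_basept.
Qed.

Definition cell_box (k : nat) (p : R * R) (r : R) (b : X) : Prop :=
  match b with
  | None => False
  | Some c => fst (proj1_sig c) = k /\ in_box p (snd (proj1_sig c)) r
  end.

(* A box inside one open cell is crs-open (it avoids x). *)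
Lemma cell_box_crs_open (k : nat) (p : R * R) (r : R) : crs_open (cell_box k p r).
Proof.
  split; [|left; simpl; tauto].
  intros j; apply rel_open_disk_box.
  intros q [dq [[_ F]|[h [ej Bq]]]]; [contradiction|].
  destruct (in_box_avoid q basept (proj2 h)) as [r1 [r1pos H1]].
  destruct (in_box_open _ _ _ Bq) as [r2 [r2pos H2]].
  exists (Rmin r1 r2); split; [apply Rmin_glb_lt; auto|].
  intros q' dq' Bq'; split; auto; right.
  assert (nqb : q' <> basept) by (apply H1; eapply in_box_mono; [eauto|apply Rmin_l]).
  exists (conj dq' nqb); split; auto.
  apply H2; eapply in_box_mono; [eauto|apply Rmin_r].
Qed.

Lemma contraction_continuous_at_cell (U : X -> Prop) (c : Xcell) (t : R) :
  crs_open U -> 0 <= t <= 1 -> U (contraction (Some c) t) ->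
  exists V : X -> Prop, crs_open V /\ V (Some c) /\
    exists eps, 0 < eps /\
      forall b s, V b -> 0 <= s <= 1 -> Rabs (s - t) < eps -> U (contraction b s).
Proof.
  intros [Ucw _] Ht HU; destruct c as [[k p] hp]; pose proof (proj1 hp) as dp.
  simpl in HU; apply preim_embed in HU; [|apply contract_in_disk; auto].
  destruct (proj1 (rel_open_disk_box _) (Ucw k) _ HU) as [r [rpos Hr]].
  exists (cell_box k p (r / 2)); split; [apply cell_box_crs_open|].
  split; [split; [reflexivity | apply in_box_refl; lra]|].
  exists (r / 4); split; [lra|].
  intros [[[j q] hq]|] s Vb Hs Hst; [|contradiction].
  destruct Vb as [ej Bq]; simpl in ej, Bq; subst j; simpl.
  pose proof (proj1 hq) as dq.
  apply preim_embed; [apply contract_in_disk; auto|].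
  apply Hr; [apply contract_in_disk; auto|].
  apply contract_continuous; auto.
Qed.

Definition origin_nbhd (U : X -> Prop) (N : nat) (b : X) : Prop :=
  match b with
  | None => True
  | Some c =>
      ((N <= fst (proj1_sig c))%nat /\ snd (proj1_sig c) <> vertpt) \/
      exists r, 0 < r /\
        (forall q, in_disk q -> in_box basept q r -> preim (fst (proj1_sig c)) U q) /\
        in_box basept (snd (proj1_sig c)) r
  end.

(* [origin_nbhd U N] is crs-open when U is a CW-open set containing x:
   each of its three kinds of points has a box neighbourhood inside it, and
   it contains the punctured disks of index >= N. *)
Lemma origin_nbhd_crs_open (U : X -> Prop) (N : nat) :
  cw_open U -> U origin -> crs_open (origin_nbhd U N).
Proof.
  intros Ucw Uo; split.
  - intros j; apply rel_open_disk_box.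
    intros q [dq [[-> _]|[h [[Nj nqv]|[r [rpos [Hr Bq]]]]]]].
    + assert (Pb : preim j U basept) by (split; [apply basept_in_disk | left; auto]).
      destruct (proj1 (rel_open_disk_box _) (Ucw j) _ Pb) as [r [rpos Hr]].
      exists r; split; auto; intros q' dq' Bq'.
      apply preim_intro; [auto | exact I|]; intros h'; right; exists r; auto.
    + destruct (in_box_avoid q vertpt nqv) as [r1 [r1pos H1]].
      exists r1; split; auto; intros q' dq' Bq'.
      apply preim_intro; [auto | exact I|]; intros h'; left; auto.
    + destruct (in_box_open _ _ _ Bq) as [r2 [r2pos H2]].
      exists r2; split; auto; intros q' dq' Bq'.
      apply preim_intro; [auto | exact I|]; intros h'; right; exists r; auto.
  - right; exists N; intros k Nk p dp npv.
    apply preim_intro; [auto | exact I|]; intros h; left; auto.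
Qed.

(* Continuity of the contraction at x: on [origin_nbhd U N] the contraction
   stays in U, since it keeps the punctured disks away from the vertex and
   keeps every box around the base point. *)
Lemma contraction_continuous_at_origin (U : X -> Prop) (t : R) :
  crs_open U -> U (contraction origin t) ->
  exists V : X -> Prop, crs_open V /\ V origin /\
    exists eps, 0 < eps /\
      forall b s, V b -> 0 <= s <= 1 -> Rabs (s - t) < eps -> U (contraction b s).
Proof.
  intros [Ucw [nUo|[N HN]]] Uo; [contradiction|].
  exists (origin_nbhd U N); split; [apply origin_nbhd_crs_open; auto|].
  split; [exact I|].
  exists 1; split; [lra|].
  intros [[[j q] hq]|] s Vb Hs _; [|exact Uo].
  pose proof (proj1 hq) as dq; simpl in *; apply preim_embed; [apply contract_in_disk; auto|].
  destruct Vb as [[Nj nqv]|[r [rpos [Hr Bq]]]].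
  - apply HN; auto; [apply contract_in_disk | apply contract_avoids_vertex]; auto.
  - apply Hr; [apply contract_in_disk; auto | apply contract_in_basept_box; auto].
Qed.

Theorem proposition3p2 : crs_contractible.
Proof.
  exists contraction, origin; split; [|split].
  - intros U HU [c|] t Ht Ha.
    + exact (contraction_continuous_at_cell U c t HU Ht Ha).
    + exact (contraction_continuous_at_origin U t HU Ha).
  - exact contraction_0.
  - exact contraction_1.
Qed.
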